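(* Let $D$ be a Dedekind domain with quotient field $K$, let $I$ be a finite non-empty index set, let $f_i\in D[x]$ be irreducible in $K[x]$ for each $i\in I$, and let $c$ be a non-unit of $D$ with $\mathsf{d}\bigl(\prod_{i\in I}f_i\bigr)=cD$. Put $f=\frac{1}{c}\prod_{i\in I}f_i\in\operatorname{Int}(D)$, and let $\mathcal{P}$ be the finite set of maximal ideals of $D$ containing $c$. Suppose that for each $P\in\mathcal{P}$, $\Lambda_P\subseteq I$ is a subset such that $f_i$ is indispensable for $P$ (among the polynomials $f_i$, $i\in I$) for every $i\in\Lambda_P$, and let $\Lambda=\bigcup_{P\in\mathcal{P}}\Lambda_P$. If $\bigcap_{P\in\mathcal{P}}\Lambda_P\neq\emptyset$, then all essentially different factorizations of $f$ into irreducibles in $\operatorname{Int}(D)$ are given by \[\frac{\prod_{i\in\Lambda\cup J_1}f_i}{c}\cdot\prod_{j\in J_2}f_j\] (each $f_j$, $j\in J_2$, counted as an individual factor), where $I=\Lambda\uplus J_1\uplus J_2$ and $J_1$ is minimal (with respect to inclusion) such that $\mathsf{d}\bigl(\prod_{i\in\Lambda\cup J_1}f_i\bigr)=cD$. That is, each such expression is a factorization of $f$ into irreducibles of $\operatorname{Int}(D)$, and every factorization of $f$ into irreducibles of $\operatorname{Int}(D)$ is essentially the same as one of them.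
   Context: $\operatorname{Int}(D)=\{h\in K[x]\mid h(D)\subseteq D\}$. For $g\in D[x]$, the fixed divisor $\mathsf{d}(g)$ is the ideal of $D$ generated by $\{g(a)\mid a\in D\}$. For a maximal ideal $P$, $\mathsf{v}_P$ is the $P$-adic valuation. Given polynomials $f_i\in D[x]$, $i\in I$, and a maximal ideal $P$, $f_k$ is called indispensable for $P$ (among the $f_i$, $i\in I$) if there exists $z\in D$ with $\mathsf{v}_P(f_k(z))>0$ and $\mathsf{v}_P(f_i(z))=0$ for all $i\neq k$. A factorization is a product of irreducible elements (non-zero non-units not expressible as a product of two non-units); two factorizations are essentially the same if they have the same number of factors and, after reindexing, corresponding factors differ by unit factors of $\operatorname{Int}(D)$. *)

From HB Require Import structures.
From mathcomp Require Import all_boot all_order all_algebra.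
From mathcomp Require Import fraction.
Set Implicit Arguments. Unset Strict Implicit. Unset Printing Implicit Defensive.
Import Order.TTheory GRing.Theory Num.Theory.
Local Open Scope ring_scope.

Section Defs.
Variable R : idomainType.
Local Notation K := {fraction R}.
Local Notation "x %:F" := (@tofrac R x).

Definition is_ideal (I : R -> Prop) : Prop :=
  [/\ I 0, (forall x y, I x -> I y -> I (x + y)) & (forall r x, I x -> I (r * x))].

Definition ideal_gen (S : R -> Prop) : R -> Prop := fun x =>
  exists s : seq (R * R), (forall p, p \in s -> S p.2) /\ x = \sum_(p <- s) p.1 * p.2.

Definition principal (c : R) : R -> Prop := fun x => exists r, x = r * c.

Definition prime_ideal (P : R -> Prop) : Prop :=
  [/\ is_ideal P, ~ P 1 & forall x y, P (x * y) -> P x \/ P y].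

Definition maximal_ideal (P : R -> Prop) : Prop :=
  [/\ is_ideal P, ~ P 1 &
     forall Q, is_ideal Q -> (forall x, P x -> Q x) -> Q 1 \/ (forall x, Q x -> P x)].

Definition noetherian_dom : Prop :=
  forall I, is_ideal I -> exists s : seq R, forall x, I x <-> ideal_gen (fun y => y \in s) x.

Definition integrally_closed_dom : Prop :=
  forall x : K, (exists p : {poly R}, p \is monic /\ root (map_poly (@tofrac R) p) x) ->
    exists a : R, x = a%:F.

Definition dim_le1 : Prop :=
  forall P, prime_ideal P -> (exists x, P x /\ x != 0) -> maximal_ideal P.

Definition dedekind_domain : Prop :=
  [/\ noetherian_dom, integrally_closed_dom & dim_le1].

Definition fixed_divisor (g : {poly R}) : R -> Prop :=
  ideal_gen (fun y => exists a, y = g.[a]).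

Definition fixdiv_is (g : {poly R}) (c : R) : Prop :=
  forall x, fixed_divisor g x <-> principal c x.

(* v_P(a) > 0  <->  a \in P  ;  v_P(a) = 0  <->  a \notin P *)
Definition vP_pos (P : R -> Prop) (a : R) : Prop := P a.
Definition vP_zero (P : R -> Prop) (a : R) : Prop := ~ P a.

Definition indispensable (I : finType) (f : I -> {poly R}) (P : R -> Prop) (k : I) : Prop :=
  exists z : R, vP_pos P (f k).[z] /\ forall i, i != k -> vP_zero P (f i).[z].

Definition intval (h : {poly K}) : Prop := forall a : R, exists b : R, h.[a%:F] = b%:F.

Definition Int_unit (h : {poly K}) : Prop :=
  intval h /\ exists g, intval g /\ h * g = 1.

Definition Int_irred (h : {poly K}) : Prop :=
  [/\ intval h, h != 0, ~ Int_unit h &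
     forall g1 g2, intval g1 -> intval g2 -> h = g1 * g2 -> Int_unit g1 \/ Int_unit g2].

Definition Int_factorization (f : {poly K}) (s : seq {poly K}) : Prop :=
  (forall h, h \in s -> Int_irred h) /\ \prod_(h <- s) h = f.

Definition Int_assoc (a b : {poly K}) : Prop := exists u, Int_unit u /\ a = u * b.

Definition ess_same (s t : seq {poly K}) : Prop :=
  size s = size t /\
  exists t', perm_eq t t' /\ forall i, (i < size s)%N -> Int_assoc (nth 0 s i) (nth 0 t' i).

End Defs.

From HB Require Import structures.
From mathcomp Require Import all_boot all_order all_algebra.
From mathcomp Require Import fraction.
From mathcomp Require Import ring.
From Stdlib Require Import Classical ClassicalEpsilon.
Import GRing.Theory.
Local Open Scope ring_scope.
Set Implicit Arguments. Unset Strict Implicit. Unset Printing Implicit Defensive.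

(* Since the f_i are irreducible in K[x], a factorization of f in Int(D) is, up to
   constants of K, a partition of I into blocks S, the factor of block S being
   b_S * f_S with f_S = prod_(i in S) f_i.  Fix k lying in every Lam_P.  For a block S
   avoiding k, the indispensability of f_k at every maximal P containing c forces
   b_S into D; as the complementary factor then takes all its values in c b_S D and
   its fixed divisor contains c, b_S is a unit of D, and no i in S lies in Lam, for
   f_i would be indispensable for some P containing c while the complementary factor
   takes values in P.  Irreducibility then makes every block avoiding k a singleton,
   and forces the block of k to be the union of Lam and a minimal J1. *)

Section Ideals.
Variable R : idomainType.
Implicit Types (J P Q S : R -> Prop) (x y : R).

Lemma ideal_gen_ideal S : is_ideal (ideal_gen S).
Proof.
split.
- by exists [::]; rewrite big_nil.
- move=> x y [s [Hs ->]] [t [Ht ->]]; exists (s ++ t); split; last by rewrite big_cat.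
  by move=> p; rewrite mem_cat => /orP[/Hs|/Ht].
- move=> r x [s [Hs ->]]; exists [seq (r * p.1, p.2) | p <- s]; split.
  + by move=> p /mapP[q /Hs ? ->].
  + by rewrite big_map mulr_sumr; apply: eq_bigr => p _; rewrite mulrA.
Qed.

Lemma ideal_gen_in S x : S x -> ideal_gen S x.
Proof.
move=> Sx; exists [:: (1, x)]; split; last by rewrite big_seq1 mul1r.
by move=> p; rewrite inE => /eqP ->.
Qed.

Lemma ideal_gen_min S J : is_ideal J -> (forall x, S x -> J x) ->
  forall x, ideal_gen S x -> J x.
Proof.
move=> [J0 JD JM] SJ x [s [Hs ->]]; elim: s Hs => [|p s IHs] Hs; first by rewrite big_nil.
rewrite big_cons; apply: JD; first by apply/JM/SJ/Hs; rewrite mem_head.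
by apply: IHs => q Hq; apply: Hs; rewrite in_cons Hq orbT.
Qed.

Lemma principal_ideal (c : R) : is_ideal (principal c).
Proof.
split; first by exists 0; rewrite mul0r.
- by move=> x y [a ->] [b ->]; exists (a + b); rewrite mulrDl.
- by move=> r x [a ->]; exists (r * a); rewrite mulrA.
Qed.

Lemma maximal_idealM P x y : maximal_ideal P -> P (x * y) -> P x \/ P y.
Proof.
move=> [[P0 PD PM] P1 Pmax] Pxy; case: (classic (P x)) => Px; [by left | right].
pose Q z := exists p r, P p /\ z = p + r * x.
have Qi : is_ideal Q.
  split; first by exists 0, 0; split => //; rewrite mul0r addr0.
  - move=> _ _ [p [r [Pp ->]]] [p' [r' [Pp' ->]]]; exists (p + p'), (r + r').
    by split; [exact: PD | rewrite mulrDl addrACA].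
  - move=> s _ [p [r [Pp ->]]]; exists (s * p), (s * r).
    by split; [exact: PM | rewrite mulrDr mulrA].
case: (Pmax Q Qi) => [z Pz|[p [r [Pp E]]]|QP].
- by exists z, 0; rewrite mul0r addr0.
- have -> : y = y * p + r * (x * y) by rewrite -[y in LHS]mulr1 E; ring.
  by apply: PD; apply: PM.
- by exfalso; apply/Px/QP; exists 0, 1; rewrite add0r mul1r.
Qed.

Lemma maximal_prod P (T : finType) (A : {set T}) (F : T -> R) : maximal_ideal P ->
  (forall t, t \in A -> ~ P (F t)) -> ~ P (\prod_(t in A) F t).
Proof.
move=> HP nF; apply: (big_ind (fun x => ~ P x)) => //.
- by case: HP.
- by move=> x y nx ny /(maximal_idealM HP) [].
Qed.

Lemma noetherian_chain_stable : noetherian_dom R ->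
  forall ch : nat -> R -> Prop, (forall n, is_ideal (ch n)) ->
  (forall n x, ch n x -> ch n.+1 x) -> exists N, forall x, ch N.+1 x -> ch N x.
Proof.
move=> HN ch ich chS.
have chmono n m x : (n <= m)%N -> ch n x -> ch m x.
  by move=> /subnK <-; elim: (m - n)%N => [|d IHd] // /IHd /chS.
pose U x := exists n, ch n x.
have iU : is_ideal U.
  split; first by exists 0%N; case: (ich 0%N).
  - move=> x y [n Hx] [m Hy]; exists (maxn n m); case: (ich (maxn n m)) => _ D _.
    by apply: D; [apply: (chmono n) | apply: (chmono m)]; rewrite ?leq_maxl ?leq_maxr.
  - by move=> r x [n Hx]; exists n; case: (ich n) => _ _ M; apply: M.
have [s Hs] := HN U iU.
have [N HsN] : exists N, forall e, e \in s -> ch N e.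
  have : forall e, e \in s -> U e by move=> e es; apply/Hs/ideal_gen_in.
  elim: s {Hs} => [|e s IHs] Us; first by exists 0%N.
  have [N1 H1] := IHs (fun e' h => Us e' (@mem_behead _ (e :: s) _ h)).
  have [N2 H2] := Us e (mem_head _ _).
  exists (maxn N1 N2) => e'; rewrite in_cons => /orP[/eqP -> | /H1].
    by apply: (chmono N2); rewrite ?leq_maxr.
  by apply: (chmono N1); rewrite ?leq_maxl.
exists N => x chx; apply: (ideal_gen_min (ich N) HsN); apply/Hs.
by exists N.+1.
Qed.

Lemma noetherian_maximal_ideal : noetherian_dom R -> forall J, is_ideal J -> ~ J 1 ->
  exists P, maximal_ideal P /\ forall x, J x -> P x.
Proof.
(* Otherwise dependent choice yields a strictly ascending chain of proper ideals over J. *)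
move=> HN J HJ J1; apply: NNPP => noP.
pose proper_over Q := [/\ is_ideal Q, ~ Q 1 & forall x, J x -> Q x].
have grow Q : exists Q', proper_over Q ->
    proper_over Q' /\ (forall x, Q x -> Q' x) /\ exists x, Q' x /\ ~ Q x.
  case: (classic (proper_over Q)) => [[iQ nQ JQ]|]; last by exists Q.
  apply: NNPP => noQ'; apply: noP; exists Q; split=> //; split=> // Q' iQ' QQ'.
  apply: NNPP => /not_or_and [nQ'1 nQ'Q]; apply: noQ'; exists Q' => _.
  split; first by split=> // x /JQ /QQ'.
  split=> //; apply: NNPP => /not_ex_all_not nx; apply: nQ'Q => x Q'x.
  by apply: NNPP => nQx; apply: (nx x).
pose next Q := proj1_sig (constructive_indefinite_description _ (grow Q)).
have nextP Q : proper_over Q -> proper_over (next Q) /\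
    (forall x, Q x -> next Q x) /\ exists x, next Q x /\ ~ Q x.
  by rewrite /next; case: constructive_indefinite_description.
pose ch n := iter n next J.
have chP n : proper_over (ch n).
  by elim: n => [|n IHn]; [split | case: (nextP _ IHn)].
have ich n : is_ideal (ch n) by case: (chP n).
have chS n x : ch n x -> ch n.+1 x by case: (nextP _ (chP n)) => _ [+ _]; apply.
have [N stable] := noetherian_chain_stable HN ich chS.
by case: (nextP _ (chP N)) => _ [_ [x [chx nx]]]; apply/nx/stable.
Qed.

End Ideals.

Section IntegerValued.
Variable R : idomainType.
Local Notation K := {fraction R}.
Local Notation tf := (@tofrac R).
Local Notation emb := (map_poly (@tofrac R)).
Implicit Types (p q : {poly R}) (g h : {poly K}) (c r : R).

Lemma intval_map p : intval (emb p).
Proof. by move=> a; exists p.[a]; apply: horner_map. Qed.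

Lemma intvalM g h : intval g -> intval h -> intval (g * h).
Proof.
move=> ig ih a; have [x ex] := ig a; have [y ey] := ih a.
by exists (x * y); rewrite hornerM ex ey rmorphM.
Qed.

Lemma intval_prod (T : Type) (s : seq T) (P : pred T) (F : T -> {poly K}) :
  (forall t, P t -> intval (F t)) -> intval (\prod_(t <- s | P t) F t).
Proof.
move=> iF; apply: big_ind => //; last exact: intvalM.
by move=> a; exists 1; rewrite hornerE rmorph1.
Qed.

Lemma intvalZ r g : intval g -> intval (tf r *: g).
Proof. by move=> ig a; have [x ex] := ig a; exists (r * x); rewrite hornerZ ex rmorphM. Qed.

Lemma Int_unit_size g : Int_unit g -> size g = 1%N.
Proof.
case=> _ [h [_ gh]]; have /eqP : size (g * h) = 1%N by rewrite gh size_poly1.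
by rewrite size_mul_eq1 => /andP[/eqP].
Qed.

Lemma Int_unit_tofrac r : r \is a GRing.unit -> Int_unit (tf r)%:P.
Proof.
move=> ur; split; first by move=> a; exists r; rewrite hornerC.
exists (tf r^-1)%:P; split; first by move=> a; exists r^-1; rewrite hornerC.
by rewrite -polyCM -rmorphM mulrV // rmorph1.
Qed.

Lemma tofrac_unit_neq0 r : r \is a GRing.unit -> tf r != 0.
Proof. by move=> ur; rewrite tofrac_eq0; apply: contraTneq ur => ->; rewrite unitr0. Qed.

Lemma fixed_divisor_ideal p : is_ideal (fixed_divisor p).
Proof. exact: ideal_gen_ideal. Qed.

Lemma fixed_divisor_value p a : fixed_divisor p p.[a].
Proof. by apply: ideal_gen_in; exists a. Qed.

Lemma fixed_divisorMr p q x : fixed_divisor (p * q) x -> fixed_divisor p x.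
Proof.
apply: ideal_gen_min; first exact: fixed_divisor_ideal.
move=> _ [a ->]; rewrite hornerM mulrC.
by case: (fixed_divisor_ideal p) => _ _; apply; apply: fixed_divisor_value.
Qed.

Lemma fixed_divisor_principal p r : (forall a, principal r p.[a]) ->
  forall x, fixed_divisor p x -> principal r x.
Proof. by move=> pr; apply: ideal_gen_min => [|_ [a ->]]; [apply: principal_ideal|]. Qed.

Lemma fixdiv_isP p c : fixed_divisor p c -> (forall a, principal c p.[a]) ->
  fixdiv_is p c.
Proof.
move=> dc pc x; split; first exact: fixed_divisor_principal.
by case=> t ->; case: (fixed_divisor_ideal p) => _ _; apply.
Qed.

Lemma intval_fixdiv p c : c != 0 -> fixdiv_is p c -> intval ((tf c)^-1 *: emb p).
Proof.
move=> c0 dpc a; have [t pa] := (dpc p.[a]).1 (fixed_divisor_value p a).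
exists t; rewrite hornerZ horner_map pa rmorphM mulrCA mulVf ?mulr1 //.
by rewrite tofrac_eq0.
Qed.

Lemma principal1_unit c : principal c 1 -> c \is a GRing.unit.
Proof. by case=> r r1; apply/unitrPr; exists r; rewrite mulrC. Qed.

End IntegerValued.

Lemma irredp_dvd_mul (F : fieldType) (p q1 q2 : {poly F}) : irreducible_poly p ->
  p %| q1 * q2 -> (p %| q1) \/ (p %| q2).
Proof.
move=> irr_p dvd_p; have [|ndvd_p] := boolP (p %| q1); [by left | right].
have cop : coprimep p q1.
  rewrite /coprimep; apply/negPn/negP => /irr_p /(_ (dvdp_gcdl p q1)) /andP[_].
  by move=> /dvdp_trans /(_ (dvdp_gcdr _ _)); apply/negP.
by rewrite -(Gauss_dvdpr _ cop).
Qed.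

Lemma setUD_subset (T : finType) (A B : {set T}) : A \subset B -> A :|: B :\: A = B.
Proof. by move=> sAB; rewrite setDE setUIr setUCr setIT (setUidPr sAB). Qed.

Lemma perm_enum_setC_singletons (J T : finType) (A : J -> {set T}) (j0 : J) (g : J -> T) :
  (forall j j', j != j' -> [disjoint A j & A j']) -> \bigcup_j A j = setT ->
  (forall j, j != j0 -> A j = [set g j]) ->
  perm_eq (enum (~: A j0)) [seq g j | j <- rem j0 (enum J)].
Proof.
move=> dA cA Ag; have mem_rem j : (j \in rem j0 (enum J)) = (j != j0).
  by rewrite (mem_rem_uniq _ (enum_uniq _)) !inE mem_enum andbT.
apply: uniq_perm; first exact: enum_uniq.
  rewrite map_inj_in_uniq; first exact/rem_uniq/enum_uniq.
  move=> j j'; rewrite !mem_rem => jj0 j'j0 gjj'.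
  have [//|/dA/disjoint_setI0 AI0] := eqVneq j j'.
  have : g j \in A j :&: A j' by rewrite inE (Ag j jj0) (Ag j' j'j0) gjj' !set11.
  by rewrite AI0 inE.
move=> x; rewrite mem_enum inE; apply/idP/mapP.
  move=> xA; have /bigcupP[j _ xj] : x \in \bigcup_j A j by rewrite cA inE.
  have jj0 : j != j0 by apply: contraNneq xA => <-.
  exists j; first by rewrite mem_rem.
  by move: xj; rewrite (Ag j jj0) inE => /eqP.
case=> j; rewrite mem_rem => jj0 ->.
by rewrite (disjointFr (dA _ _ jj0)) // (Ag j jj0) set11.
Qed.

Section FactorProducts.
Variable R : idomainType.
Local Notation K := {fraction R}.
Local Notation emb := (map_poly (@tofrac R)).
Variables (I : finType) (f : I -> {poly R}).
Hypothesis firr : forall i, irreducible_poly (emb (f i)).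
Implicit Types (S T : {set I}) (a b : K) (g : {poly K}).

Definition fprod S : {poly R} := \prod_(i in S) f i.
Definition fprodK S : {poly K} := emb (fprod S).

Lemma fprodKE S : fprodK S = \prod_(i in S) emb (f i).
Proof. exact: rmorph_prod. Qed.

Lemma fprodK_neq0 S : fprodK S != 0.
Proof. by rewrite fprodKE; apply/prodf_neq0 => i _; apply: irredp_neq0. Qed.

Lemma fprodK0 : fprodK set0 = 1.
Proof. by rewrite fprodKE big_set0. Qed.

Lemma fprodK1 j : fprodK [set j] = emb (f j).
Proof. by rewrite fprodKE big_set1. Qed.

Lemma fprodKU1 S j : j \notin S -> fprodK (j |: S) = emb (f j) * fprodK S.
Proof. by move=> jS; rewrite !fprodKE big_setU1. Qed.

Lemma fprodD S T : S \subset T -> fprod T = fprod S * fprod (T :\: S).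
Proof. by move=> sST; rewrite /fprod (big_setID S) (setIidPr sST). Qed.

Lemma fprodKD S T : S \subset T -> fprodK T = fprodK S * fprodK (T :\: S).
Proof. by move=> sST; rewrite /fprodK (fprodD sST) rmorphM. Qed.

Lemma size_fprodK_gt1 S : S != set0 -> (1 < size (fprodK S))%N.
Proof.
case/set0Pn => j jS; rewrite -(setD1K jS) fprodKU1 ?setD11 //.
rewrite size_mul ?(irredp_neq0 (firr j)) ?fprodK_neq0 //.
have := (firr j).1; have := fprodK_neq0 (S :\ j); rewrite -size_poly_gt0.
by case: (size (fprodK _)) => // n _ h; rewrite addnS ltn_addr.
Qed.

Lemma fprodK_factor2 T g1 g2 a : a != 0 -> g1 * g2 = a *: fprodK T ->
  exists S b1 b2, [/\ S \subset T, g1 = b1 *: fprodK S,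
                      g2 = b2 *: fprodK (T :\: S) & b1 * b2 = a].
Proof.
move=> a0; have [n ltTn] := ubnP #|T|; elim: n T g1 g2 ltTn => // n IHn T g1 g2.
rewrite ltnS => leTn E; have [T0|/set0Pn[i iT]] := eqVneq T set0.
  rewrite T0 fprodK0 alg_polyC in E *.
  have /eqP : size (g1 * g2) = 1%N by rewrite E size_polyC a0.
  rewrite size_mul_eq1 => /andP[/eqP s1 /eqP s2].
  have e1 : g1 = (g1`_0)%:P by apply: size1_polyC; rewrite s1.
  have e2 : g2 = (g2`_0)%:P by apply: size1_polyC; rewrite s2.
  exists set0, g1`_0, g2`_0; rewrite sub0set setD0 fprodK0 !alg_polyC -e1 -e2.
  by split=> //; apply: polyC_inj; rewrite polyCM -e1 -e2.
have ltTi : (#|T :\ i| < n)%N by rewrite (cardsD1 i T) iT in leTn.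
have i_notin S : S \subset T :\ i -> i \notin S.
  by move=> /subsetP sS; apply/negP => /sS; rewrite setD11.
wlog /dvdpP [q def_g1] : g1 g2 E / emb (f i) %| g1.
  move=> wlog_g1; have : emb (f i) %| g1 * g2.
    by rewrite E -(setD1K iT) fprodKU1 ?setD11 // scalerAr dvdp_mulIl.
  case/(irredp_dvd_mul (firr i)); first exact: wlog_g1.
  rewrite mulrC in E => /(wlog_g1 _ _ E) [S [b1 [b2 [sST e2 e1 eb]]]].
  exists (T :\: S), b2, b1; rewrite subsetDl mulrC setDDr setDv set0U.
  by rewrite (setIidPr sST).
subst g1; have Eq : q * g2 = a *: fprodK (T :\ i).
  apply: (mulIf (irredp_neq0 (firr i))); rewrite mulrAC E -scalerAl mulrC.
  by rewrite -fprodKU1 ?setD11 // setD1K.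
have [S [b1 [b2 [sS eq_q eg2 eb]]]] := IHn _ q g2 ltTi Eq.
have sT : S \subset T by apply: subset_trans sS (subsetDl _ _).
exists (i |: S), b1, b2; rewrite subUset sub1set iT sT -setDDl eq_q eg2 -scalerAl.
by rewrite mulrC -fprodKU1 ?i_notin.
Qed.

Lemma fprodK_factor_seq (s : seq {poly K}) T a : a != 0 ->
  \prod_(h <- s) h = a *: fprodK T ->
  exists (St : 'I_(size s) -> {set I}) (b : 'I_(size s) -> K),
  [/\ forall o : 'I_(size s), s`_o = b o *: fprodK (St o),
      forall o o', o != o' -> [disjoint St o & St o'],
      \bigcup_o St o = T & \prod_o b o = a].
Proof.
elim: s T a => [|h s IHs] T a a0 /=.
  rewrite big_nil => E; exists (fun _ => set0), (fun _ => 0).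
  have T0 : T = set0.
    case: (eqVneq T set0) => // /size_fprodK_gt1.
    by rewrite -(size_scale _ a0) -E size_poly1.
  rewrite T0 fprodK0 alg_polyC in E *; rewrite !big_ord0; split=> //; try by case.
  by apply: polyC_inj; rewrite -E polyC1.
rewrite big_cons => E; have [S [b1 [b2 [sST eh es eb]]]] := fprodK_factor2 a0 E.
have b20 : b2 != 0 by apply: contraNneq a0 => b20; rewrite -eb b20 mulr0.
have [St [b [eSt dSt cSt pb]]] := IHs _ _ b20 es.
have dS o : [disjoint S & St o].
  have sSt : St o \subset T :\: S by rewrite -cSt; apply: bigcup_sup.
  by rewrite disjoint_sym (disjointWl sSt) // disjoints_subset setDE subsetIr.
exists (fun o => if unlift ord0 o is Some o' then St o' else S),
       (fun o => if unlift ord0 o is Some o' then b o' else b1).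
split.
- by move=> o; case: unliftP => [o'|] -> /=; rewrite ?add0n.
- move=> o o'; case: (unliftP ord0 o) => [p|] ->; case: (unliftP ord0 o') => [p'|] ->.
  + by rewrite (inj_eq (@lift_inj _ ord0)); apply: dSt.
  + by rewrite disjoint_sym.
  + by [].
  + by rewrite eqxx.
- rewrite big_ord_recl unlift_none; under eq_bigr do rewrite liftK.
  by rewrite cSt setUD_subset.
- by rewrite big_ord_recl unlift_none; under eq_bigr do rewrite liftK; rewrite pb.
Qed.

End FactorProducts.

Section IndispensableFactors.
Variable R : idomainType.
Local Notation K := {fraction R}.
Local Notation tf := (@tofrac R).
Local Notation emb := (map_poly (@tofrac R)).
Variables (I : finType) (f : I -> {poly R}) (c : R).
Variables (Lam : (R -> Prop) -> {set I}) (Lam0 : {set I}) (k : I).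
Hypothesis HN : noetherian_dom R.
Hypothesis firr : forall i, irreducible_poly (emb (f i)).
Hypothesis c0 : c != 0.
Hypothesis cnu : c \isn't a GRing.unit.
Hypothesis Hfd : fixdiv_is (\prod_(i in I) f i) c.
Hypothesis Hind : forall P, maximal_ideal P -> P c ->
  forall i, i \in Lam P -> indispensable f P i.
Hypothesis HLam0 : forall i, i \in Lam0 <-> exists P, [/\ maximal_ideal P, P c & i \in Lam P].
Hypothesis Hk : forall P, maximal_ideal P -> P c -> k \in Lam P.

Local Notation fprod := (fprod f).
Local Notation fprodK := (fprodK f).
Implicit Types (S T : {set I}) (b : K) (g h : {poly K}).

Lemma tofrac_c_neq0 : tf c != 0.
Proof. by rewrite tofrac_eq0. Qed.

Lemma invc_neq0 : (tf c)^-1 != 0.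
Proof. by rewrite invr_eq0 tofrac_c_neq0. Qed.

Lemma fprod_setT : fprod setT = \prod_(i in I) f i.
Proof. by apply: eq_bigl => i; rewrite inE. Qed.

Lemma c_fixed_divisor S : fixed_divisor (fprod S) c.
Proof.
have : fixed_divisor (fprod setT) c by rewrite fprod_setT; apply/Hfd; exists 1; rewrite mul1r.
by rewrite (fprodD f (subsetT S)); apply: fixed_divisorMr.
Qed.

Lemma maximal_over_c : exists P, maximal_ideal P /\ P c.
Proof.
have nc1 : ~ principal c 1 by move/principal1_unit; apply/negP.
have [P [HP cP]] := noetherian_maximal_ideal HN (principal_ideal c) nc1.
by exists P; split=> //; apply: cP; exists 1; rewrite mul1r.
Qed.

Lemma k_in_Lam0 : k \in Lam0.
Proof. by have [P [HP Pc]] := maximal_over_c; apply/HLam0; exists P; split=> //; apply: Hk. Qed.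

Lemma indispensable_avoid P i S : maximal_ideal P -> P c -> i \in Lam P -> i \notin S ->
  exists z, P (f i).[z] /\ ~ P (fprod S).[z].
Proof.
move=> HP Pc iL iS; have [z [Pz nPz]] := Hind HP Pc iL.
exists z; split=> //; rewrite /fprod horner_prod; apply: maximal_prod => // j jS.
by apply: nPz; apply: contraNneq iS => <-.
Qed.

(* The ideal {x | x b in D} contains c, as it contains the values of f_S; were it
   proper, f_k would take a value outside a maximal ideal above it. *)
Lemma coef_integral S b : k \notin S -> intval (b *: fprodK S) -> exists r, b = tf r.
Proof.
move=> kS ibS; pose Q x := exists e, tf x * b = tf e.
have Qi : is_ideal Q.
  split; first by exists 0; rewrite !rmorph0 mul0r.
  - by move=> x y [e ex] [e' ey]; exists (e + e'); rewrite !rmorphD mulrDl ex ey.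
  - by move=> r x [e ex]; exists (r * e); rewrite !rmorphM -mulrA ex.
have [[e Q1]|nQ1] := classic (Q 1); first by exists e; rewrite -Q1 rmorph1 mul1r.
have [P [HP QP]] := noetherian_maximal_ideal HN Qi nQ1.
have Qvals a : Q (fprod S).[a].
  by have [e he] := ibS a; exists e; rewrite mulrC -he hornerZ horner_map.
have Pc : P c by apply: QP; apply: (ideal_gen_min Qi) (c_fixed_divisor S) => _ [a ->].
have [z [_ nPz]] := indispensable_avoid HP Pc (Hk HP Pc) kS.
by case: nPz; apply/QP/Qvals.
Qed.

Lemma values_principal S b r : b * tf r = (tf c)^-1 -> intval (b *: fprodK S) ->
  forall a, principal (c * r) (fprod S).[a].
Proof.
move=> bcr ibS a; have [e he] := ibS a; exists e.
rewrite hornerZ horner_map in he; change (b * tf (fprod S).[a] = tf e) in he.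
have bcr1 : b * tf r * tf c = 1 by rewrite bcr mulVf ?tofrac_c_neq0.
apply/eqP; rewrite -tofrac_eq; apply/eqP.
by rewrite !tofracM -he -[LHS]mul1r -bcr1; ring.
Qed.

Lemma fixdiv_of_intval S b r : b * tf r = (tf c)^-1 -> intval (b *: fprodK S) ->
  fixdiv_is (fprod S) c.
Proof.
move=> bcr ibS; apply: fixdiv_isP (c_fixed_divisor S) _ => a.
by have [e ->] := values_principal bcr ibS a; exists (e * r); rewrite mulrA mulrAC.
Qed.

Lemma factor_without_k S1 S2 b1 b2 : k \notin S2 -> [disjoint S1 & S2] ->
  b1 * b2 = (tf c)^-1 -> intval (b1 *: fprodK S1) -> intval (b2 *: fprodK S2) ->
  exists r, [/\ b2 = tf r, r \is a GRing.unit & [disjoint S2 & Lam0]].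
Proof.
move=> kS2 dS12 b12 ib1 ib2; have [r b2r] := coef_integral kS2 ib2; subst b2.
have vals := values_principal b12 ib1.
exists r; split=> //.
- have [t ct] := fixed_divisor_principal vals (c_fixed_divisor S1).
  by apply/unitrPr; exists t; apply: (mulfI c0); rewrite mulr1 [RHS]ct; ring.
- rewrite -setI_eq0; apply/set0Pn => -[i]; rewrite inE => /andP[iS2 /HLam0[P [HP Pc iL]]].
  have [z [_ nPz]] := indispensable_avoid HP Pc iL (negbT (disjointFl dS12 iS2)).
  apply: nPz; have [e ->] := vals z; case: HP => -[_ _ PM] _ _.
  by rewrite mulrCA mulrC; apply: PM.
Qed.

Lemma nonunit_scale_fprodK b S : b != 0 -> S != set0 -> ~ Int_unit (b *: fprodK S).
Proof.
move=> b0 S0 /Int_unit_size; rewrite size_scale // => size1.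
by have := size_fprodK_gt1 firr S0; rewrite size1.
Qed.

Lemma fixdiv_fprod_neq0 S : fixdiv_is (fprod S) c -> S != set0.
Proof.
move=> dS; apply/negP => /eqP S0; move: dS; rewrite S0 /fprod big_set0 => d1.
have := fixed_divisor_value (1 : {poly R}) 0.
by rewrite hornerE => /d1 /principal1_unit; apply/negP.
Qed.

Definition admissible (J1 : {set I}) :=
  [/\ [disjoint J1 & Lam0], fixdiv_is (fprod (Lam0 :|: J1)) c &
      forall J' : {set I}, J' \proper J1 -> ~ fixdiv_is (fprod (Lam0 :|: J')) c].

Definition canonical_factors (J1 : {set I}) : seq {poly K} :=
  ((tf c)^-1 *: fprodK (Lam0 :|: J1)) :: [seq emb (f j) | j <- enum (~: (Lam0 :|: J1))].

Lemma admissible_cofactor_unit (J1 : {set I}) S1 S2 b1 b2 :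
  admissible J1 -> k \notin S2 -> S1 :|: S2 = Lam0 :|: J1 -> [disjoint S1 & S2] ->
  b1 * b2 = (tf c)^-1 -> intval (b1 *: fprodK S1) -> intval (b2 *: fprodK S2) -> Int_unit (b2 *: fprodK S2).
Proof.
move=> [dJ _ minJ] kS2 U12 d12 b12 ib1 ib2.
have [r [b2r ur dS2]] := factor_without_k kS2 d12 b12 ib1 ib2; subst b2.
have [->|/set0Pn[x xS2]] := eqVneq S2 set0.
  by rewrite fprodK0 alg_polyC; apply: Int_unit_tofrac.
have LS1 : Lam0 \subset S1.
  apply/subsetP => i iL; have : i \in S1 :|: S2 by rewrite U12 inE iL.
  by rewrite inE (disjointFl dS2 iL) orbF.
have xJ1 : x \in J1.
  have : x \in Lam0 :|: J1 by rewrite -U12 inE xS2 orbT.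
  by rewrite inE (disjointFr dS2 xS2).
have sS1J1 : S1 :\: Lam0 \subset J1.
  apply/subsetP => i; rewrite inE => /andP[iL iS1].
  have : i \in Lam0 :|: J1 by rewrite -U12 inE iS1.
  by rewrite inE (negPf iL).
exfalso; apply: (minJ (S1 :\: Lam0)).
  by apply/properP; split=> //; exists x; rewrite // inE (disjointFl d12 xS2) andbF.
by rewrite setUD_subset //; apply: fixdiv_of_intval b12 ib1.
Qed.

Lemma admissible_irred (J1 : {set I}) :
  admissible J1 -> Int_irred ((tf c)^-1 *: fprodK (Lam0 :|: J1)).
Proof.
move=> adJ; have [_ dJ _] := adJ; set T := Lam0 :|: J1.
split.
- exact: intval_fixdiv.
- by rewrite scaler_eq0 negb_or invc_neq0 fprodK_neq0.
- exact: nonunit_scale_fprodK invc_neq0 (fixdiv_fprod_neq0 dJ).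
move=> g1 g2 ig1 ig2 E.
have [S [b1 [b2 [sST e1 e2 b12]]]] := fprodK_factor2 firr invc_neq0 (esym E).
have dS : [disjoint S & T :\: S] by rewrite -setI_eq0 setDE setICA setICr setI0.
rewrite e1 e2 in ig1 ig2 *; have [kS|kS] := boolP (k \in S).
  right; apply: (admissible_cofactor_unit adJ _ (setUD_subset sST) dS b12) => //.
  by rewrite inE kS.
left; apply: (admissible_cofactor_unit adJ kS _ _ (_ : b2 * b1 = _)) => //.
- by rewrite setUC setUD_subset.
- by rewrite disjoint_sym.
- by rewrite mulrC.
Qed.

Lemma const_factor_unit j b1 b2 : j \notin Lam0 -> b1 * b2 = 1 ->
  intval b1%:P -> intval (b2 *: fprodK [set j]) -> Int_unit b1%:P.
Proof.
move=> jL b12 ib1 ib2.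
have [r1 b1r] : exists r, b1 = tf r by have [r e] := ib1 0; exists r; rewrite -e hornerC.
have kj : k \notin [set j] by rewrite inE; apply: contraNneq jL => <-; apply: k_in_Lam0.
have [r2 b2r] := coef_integral kj ib2.
rewrite b1r; apply/Int_unit_tofrac/unitrPr; exists r2.
by apply/eqP; rewrite -tofrac_eq tofracM -b1r -b2r b12 tofrac1.
Qed.

Lemma f_irred j : j \notin Lam0 -> Int_irred (emb (f j)).
Proof.
move=> jL; split.
- exact: intval_map.
- exact: irredp_neq0.
- by move/Int_unit_size => size1; have := (firr j).1; rewrite size1.
move=> g1 g2 ig1 ig2 E.
have E1 : g1 * g2 = 1 *: fprodK [set j] by rewrite scale1r fprodK1 E.
have [S [b1 [b2 [sS e1 e2 b12]]]] := fprodK_factor2 firr (oner_neq0 _) E1.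
move: sS e1 e2; rewrite subset1 => /orP[/eqP->|/eqP->].
  rewrite setDv fprodK0 alg_polyC => e1 e2; rewrite e1 e2 in ig1 ig2 *.
  by right; apply: (const_factor_unit jL (_ : b2 * b1 = 1)); rewrite // mulrC.
rewrite setD0 fprodK0 alg_polyC => e1 e2; rewrite e1 e2 in ig1 ig2 *.
by left; apply: (const_factor_unit jL b12).
Qed.

Lemma admissible_factorization (J1 : {set I}) : admissible J1 ->
  Int_factorization ((tf c)^-1 *: emb (\prod_(i in I) f i)) (canonical_factors J1).
Proof.
move=> adJ; split.
  move=> h; rewrite inE => /orP[/eqP->|/mapP[j]]; first exact: admissible_irred.
  by rewrite mem_enum !inE negb_or => /andP[jL _] ->; apply: f_irred.
rewrite big_cons big_map big_enum /= -fprodKE -scalerAl -setTD.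
by rewrite -fprodKD ?subsetT // /fprodK fprod_setT.
Qed.

Lemma irred_unit_scale_singleton S r : r \is a GRing.unit ->
  Int_irred (tf r *: fprodK S) -> exists j, S = [set j].
Proof.
move=> ur [_ _ nu irr]; have [S0|/set0Pn[j jS]] := eqVneq S set0.
  by case: nu; rewrite S0 fprodK0 alg_polyC; apply: Int_unit_tofrac.
exists j; apply/eqP; rewrite eqEsubset sub1set jS andbT -setD_eq0.
apply/negPn/negP => Sj.
have := irr (tf r *: fprodK [set j]) (fprodK (S :\ j)) (intvalZ r (intval_map _)) (intval_map _).
case.
- by rewrite -scalerAl -fprodKD ?sub1set.
- by apply: nonunit_scale_fprodK (tofrac_unit_neq0 ur) _; apply/set0Pn; exists j; rewrite set11.
- by rewrite -[fprodK _]scale1r; apply: nonunit_scale_fprodK (oner_neq0 _) Sj.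
Qed.

Section GivenFactorization.
Variable s : seq {poly K}.
Hypothesis s_irred : forall h, h \in s -> Int_irred h.
Hypothesis s_prod : \prod_(o < size s) s`_o = (tf c)^-1 *: fprodK setT.
Variables (St : 'I_(size s) -> {set I}) (b : 'I_(size s) -> K).
Hypothesis s_shape : forall o : 'I_(size s), s`_o = b o *: fprodK (St o).
Hypothesis St_disjoint : forall o o', o != o' -> [disjoint St o & St o'].
Hypothesis St_cover : \bigcup_o St o = setT.
Hypothesis b_prod : \prod_o b o = (tf c)^-1.
Variable o0 : 'I_(size s).
Hypothesis k_o0 : k \in St o0.

Lemma s_irred_nth (o : 'I_(size s)) : Int_irred s`_o.
Proof. by apply/s_irred/mem_nth. Qed.

Lemma coef_neq0 o : b o != 0.
Proof.
have [_ + _ _] := s_irred_nth o; rewrite s_shape.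
by apply: contraNneq => ->; rewrite scale0r.
Qed.

Lemma cofactor_intval o : intval (((tf c)^-1 / b o) *: fprodK (~: St o)).
Proof.
have [_ s0 _ _] := s_irred_nth o.
have Eo : s`_o * \prod_(o' | o' != o) s`_o' = (tf c)^-1 *: fprodK setT.
  by rewrite -s_prod [RHS](bigD1 o).
have Ec : s`_o * (((tf c)^-1 / b o) *: fprodK (~: St o)) = (tf c)^-1 *: fprodK setT.
  rewrite s_shape -scalerAl -scalerAr scalerA mulrCA mulfV ?coef_neq0 // mulr1.
  by rewrite -setTD -fprodKD ?subsetT.
rewrite -(mulfI s0 (etrans Eo (esym Ec))).
by apply: intval_prod => o' _; case: (s_irred_nth o').
Qed.

Lemma other_factor_unit o : o != o0 ->
  exists r, [/\ b o = tf r, r \is a GRing.unit & [disjoint St o & Lam0]].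
Proof.
move=> oo0; apply: (factor_without_k (S1 := ~: St o) (b1 := (tf c)^-1 / b o)).
- by rewrite (disjointFl (St_disjoint oo0) k_o0).
- by rewrite disjoints_subset.
- by rewrite divfK ?coef_neq0.
- exact: cofactor_intval.
- by rewrite -s_shape; case: (s_irred_nth o).
Qed.

Definition factor_index o := odflt k [pick j in St o].

Lemma St_singleton o : o != o0 -> St o = [set factor_index o].
Proof.
move=> oo0; have [r [br ur _]] := other_factor_unit oo0.
have [j Sj] : exists j, St o = [set j].
  by apply: (irred_unit_scale_singleton ur); rewrite -br -s_shape; apply: s_irred_nth.
rewrite /factor_index Sj; case: pickP => [x /set1P -> //|].
by move=> /(_ j); rewrite set11.
Qed.

Lemma Lam0_sub_main : Lam0 \subset St o0.
Proof.
apply/subsetP => x xL; have /bigcupP[o _ xo] : x \in \bigcup_o St o by rewrite St_cover inE.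
have [<- //|oo0] := eqVneq o o0; have [r [_ _ dL]] := other_factor_unit oo0.
by rewrite (disjointFr dL xo) in xL.
Qed.

Lemma main_coef_unit : exists u, b o0 * tf u = (tf c)^-1 /\ u \is a GRing.unit.
Proof.
have [u [bu uu]] : exists u, \prod_(o | o != o0) b o = tf u /\ u \is a GRing.unit.
  apply: (big_ind (fun x => exists u, x = tf u /\ u \is a GRing.unit)).
  - by exists 1; rewrite tofrac1 unitr1.
  - by move=> _ _ [u [-> uu]] [v [-> uv]]; exists (u * v); rewrite tofracM unitrM uu uv.
  - by move=> o oo0; have [r [br ur _]] := other_factor_unit oo0; exists r.
by exists u; split; rewrite // -bu -b_prod [RHS](bigD1 o0).
Qed.

Lemma main_factor_admissible : admissible (St o0 :\: Lam0).
Proof.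
have [u [b0u uu]] := main_coef_unit.
have ib0 : intval (b o0 *: fprodK (St o0)) by rewrite -s_shape; case: (s_irred_nth o0).
rewrite /admissible setUD_subset ?Lam0_sub_main //; split.
- by rewrite disjoints_subset setDE subsetIr.
- exact: fixdiv_of_intval b0u ib0.
move=> J' pJ' dJ'; set T := Lam0 :|: J' in dJ' *.
have sT : T \subset St o0.
  by rewrite subUset Lam0_sub_main (subset_trans (proper_sub pJ') (subsetDl _ _)).
have D0 : St o0 :\: T != set0.
  case/properP: pJ' => _ [x]; rewrite inE => /andP[xL xS] xJ'.
  by apply/set0Pn; exists x; rewrite !inE negb_or xL xJ' xS.
have [_ _ _ irr] := s_irred_nth o0.
have split_s : s`_o0 = ((tf c)^-1 *: fprodK T) * ((tf u)^-1 *: fprodK (St o0 :\: T)).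
  rewrite s_shape (fprodKD f sT) -scalerAl -scalerAr scalerA; congr (_ *: _).
  by rewrite -b0u mulfK ?tofrac_unit_neq0.
have iu : intval ((tf u)^-1 *: fprodK (St o0 :\: T)).
  by rewrite -(rmorphV _ uu); apply/intvalZ/intval_map.
case: (irr _ _ (intval_fixdiv c0 dJ') iu split_s).
- exact: nonunit_scale_fprodK invc_neq0 (fixdiv_fprod_neq0 dJ').
- by apply: nonunit_scale_fprodK D0; rewrite invr_eq0 tofrac_unit_neq0.
Qed.

Lemma ess_same_canonical : ess_same s (canonical_factors (St o0 :\: Lam0)).
Proof.
have [u [b0u uu]] := main_coef_unit.
set G := (tf c)^-1 *: fprodK (St o0).
pose phi o := if o == o0 then G else emb (f (factor_index o)).
have perm_phi :
    perm_eq (canonical_factors (St o0 :\: Lam0)) [seq phi o | o <- enum 'I_(size s)].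
  rewrite /canonical_factors setUD_subset ?Lam0_sub_main // perm_sym.
  apply: perm_trans (perm_map phi (perm_to_rem (mem_enum _ o0))) _.
  rewrite /= {1}/phi eqxx perm_cons.
  have -> : [seq phi o | o <- rem o0 (enum 'I_(size s))] =
            [seq emb (f j) | j <- [seq factor_index o | o <- rem o0 (enum 'I_(size s))]].
    rewrite -map_comp; apply/eq_in_map => o.
    by rewrite (mem_rem_uniq _ (enum_uniq _)) !inE => /andP[oo0 _]; rewrite /phi (negPf oo0).
  by apply: perm_map; rewrite perm_sym; apply: perm_enum_setC_singletons St_singleton.
split; first by rewrite (perm_size perm_phi) size_map size_enum_ord.
exists [seq phi o | o <- enum 'I_(size s)]; split=> // i lti.
rewrite (nth_map o0) ?size_enum_ord // -[i]/(nat_of_ord (Ordinal lti)) nth_ord_enum.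
rewrite /phi; case: eqVneq => [->|oo0].
  exists ((tf u)^-1)%:P; split.
    by rewrite -(rmorphV _ uu); apply: Int_unit_tofrac; rewrite unitrV.
  by rewrite s_shape mul_polyC scalerA -b0u mulrC mulfK ?tofrac_unit_neq0.
have [r [br ur _]] := other_factor_unit oo0.
exists (tf r)%:P; split; first exact: Int_unit_tofrac.
by rewrite s_shape (St_singleton oo0) fprodK1 br mul_polyC.
Qed.

End GivenFactorization.

Lemma factorization_canonical s :
  Int_factorization ((tf c)^-1 *: emb (\prod_(i in I) f i)) s ->
  exists J1, admissible J1 /\ ess_same s (canonical_factors J1).
Proof.
case=> s_irred s_prod.
have s_prodT : \prod_(h <- s) h = (tf c)^-1 *: fprodK setT.
  by rewrite s_prod /fprodK fprod_setT.
have s_prodN : \prod_(o < size s) s`_o = (tf c)^-1 *: fprodK setT.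
  by rewrite -s_prodT (big_nth 0) big_mkord.
have [St [b [s_shape St_disj St_cover b_prod]]] := fprodK_factor_seq firr invc_neq0 s_prodT.
have /bigcupP[o0 _ k_o0] : k \in \bigcup_o St o by rewrite St_cover inE.
exists (St o0 :\: Lam0); split.
- exact: (@main_factor_admissible s s_irred s_prodN St b
            s_shape St_disj St_cover b_prod o0 k_o0).
- exact: (@ess_same_canonical s s_irred s_prodN St b
            s_shape St_disj St_cover b_prod o0 k_o0).
Qed.

End IndispensableFactors.

Unset Implicit Arguments. Set Strict Implicit.

Theorem lemma3p7 (R : idomainType) (I : finType) (f : I -> {poly R}) (c : R)
  (Lam : (R -> Prop) -> {set I}) (Lam0 : {set I}) :
  dedekind_domain R ->
  (0 < #|I|)%N ->
  (forall i, irreducible_poly (map_poly (@tofrac R) (f i))) ->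
  c != 0 -> c \isn't a GRing.unit ->
  fixdiv_is (\prod_(i in I) f i) c ->
  (forall P, maximal_ideal P -> P c -> forall i, i \in Lam P -> indispensable f P i) ->
  (forall i, i \in Lam0 <-> exists P, [/\ maximal_ideal P, P c & i \in Lam P]) ->
  (exists i, forall P, maximal_ideal P -> P c -> i \in Lam P) ->
  let F := (@tofrac R c)^-1 *: map_poly (@tofrac R) (\prod_(i in I) f i) in
  let good (J1 : {set I}) :=
    [/\ [disjoint J1 & Lam0],
        fixdiv_is (\prod_(i in Lam0 :|: J1) f i) c &
        forall J' : {set I}, J' \proper J1 -> ~ fixdiv_is (\prod_(i in Lam0 :|: J') f i) c] in
  let fact (J1 : {set I}) : seq {poly {fraction R}} :=
    ((@tofrac R c)^-1 *: map_poly (@tofrac R) (\prod_(i in Lam0 :|: J1) f i))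
      :: [seq map_poly (@tofrac R) (f j) | j <- enum (~: (Lam0 :|: J1))] in
  (forall J1, good J1 -> Int_factorization F (fact J1)) /\
  (forall s, Int_factorization F s -> exists J1, good J1 /\ ess_same s (fact J1)).
Proof.
move=> [HN _ _] _ firr c0 cnu Hfd Hind HLam0 [k Hk] F good fact; split.
- exact: (admissible_factorization HN firr c0 cnu Hfd Hind HLam0 Hk).
- exact: (factorization_canonical HN firr c0 cnu Hfd Hind HLam0 Hk).
Qed.
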